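(* Let $\mathcal{A}$ be a pOC with state set $Q$ whose underlying chain $\mathcal{X}$ is strongly connected, with trend $t$, and let $v\in\mathbb{R}^Q$ be any potential. Fix an initial configuration $r(c)$. For runs $w$ of $\mathcal{M}_\mathcal{A}$ starting in $r(c)$, let $p^{(i)}(w)$ and $c^{(i)}(w)$ be the control state and counter value of $w(i)$. Define $$m^{(i)}=\begin{cases}c^{(i)}+v_{p^{(i)}}-i t & \text{if } c^{(j)}\ge1 \text{ for all } 0\le j<i,\\ m^{(i-1)} & \text{otherwise.}\end{cases}$$ Then $m^{(0)},m^{(1)},\dots$ is a martingale.
   Context: A pOC is $\mathcal{A}=(Q,\delta^{=0},\delta^{>0},P^{=0},P^{>0})$ with the following components. - $\delta^{>0}\subseteq Q\times\{-1,0,1\}\times Q$ are the positive rules and $\delta^{=0}\subseteq Q\times\{0,1\}\times Q$ are the zero rules. Every state has both kinds of outgoing rule. - $P^{>0}$ and $P^{=0}$ are positive probability distributions over the outgoing rules of each state. $\mathcal{M}_\mathcal{A}$ is the Markov chain on configurations $p(i)$ with the following transitions: - $p(0)\to q(c)$ with probability $P^{=0}(p,c,q)$; - for $i\ge1$, $p(i)\to q(i+c)$ with probability $P^{>0}(p,c,q)$. $\mathcal{X}$ is the finite Markov chain on $Q$ with transition matrix $A_{pq}=\sum_cP^{>0}(p,c,q)$. $\alpha$ is its invariant distribution, $s_p=\sum_{(p,c,q)\in\delta^{>0}}P^{>0}(p,c,q)c$, and the trend is $t=\alpha s$. A potential is a vector $v$ with $s+Av=v+\mathbf{1}t$. *)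

From HB Require Import structures.
From mathcomp Require Import all_boot all_order all_algebra.
From mathcomp Require Import reals.
Set Implicit Arguments. Unset Strict Implicit. Unset Printing Implicit Defensive.
Import Order.TTheory GRing.Theory Num.Theory.
Local Open Scope ring_scope.

Section POC.
Variables (R : realType) (Q : finType).

(* A pOC is given by its two families of rule probabilities:
   Pz p c q = P^{=0}(p,c,q) and Pp p c q = P^{>0}(p,c,q), with c : int.
   The rule sets are the supports: delta^{=0} = {(p,c,q) | Pz p c q > 0},
   delta^{>0} = {(p,c,q) | Pp p c q > 0}. *)
Definition is_pOC (Pz Pp : Q -> int -> Q -> R) : Prop :=
  [/\ (forall p c q, 0 <= Pz p c q) /\ (forall p c q, 0 <= Pp p c q),
      (forall p c q, Pz p c q != 0 -> (c == 0) || (c == 1)),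
      (forall p c q, Pp p c q != 0 -> (c == -1) || (c == 0) || (c == 1)),
      (forall p, \sum_(q : Q) \sum_(c <- [:: 0; 1]) Pz p c q = 1)
    & (forall p, \sum_(q : Q) \sum_(c <- [:: -1; 0; 1]) Pp p c q = 1)].

Definition Amat (Pp : Q -> int -> Q -> R) (p q : Q) : R :=
  \sum_(c <- [:: -1; 0; 1]) Pp p c q.

Definition svec (Pp : Q -> int -> Q -> R) (p : Q) : R :=
  \sum_(q : Q) \sum_(c <- [:: -1; 0; 1]) Pp p c q * c%:~R.

Definition strongly_connected (Pp : Q -> int -> Q -> R) : Prop :=
  forall p q : Q, connect [rel x y | 0 < Amat Pp x y] p q.

Definition invariant_dist (Pp : Q -> int -> Q -> R) (alpha : Q -> R) : Prop :=
  [/\ (forall p, 0 <= alpha p),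
      \sum_(p : Q) alpha p = 1
    & (forall q, \sum_(p : Q) alpha p * Amat Pp p q = alpha q)].

Definition trend (Pp : Q -> int -> Q -> R) (alpha : Q -> R) : R :=
  \sum_(p : Q) alpha p * svec Pp p.

Definition potential (Pp : Q -> int -> Q -> R) (t : R) (v : Q -> R) : Prop :=
  forall p, svec Pp p + \sum_(q : Q) Amat Pp p q * v q = v p + t.

Definition trans (Pz Pp : Q -> int -> Q -> R) (x y : Q * nat) : R :=
  if x.2 is 0%N then Pz x.1 (y.2)%:Z y.1
  else Pp x.1 ((y.2)%:Z - (x.2)%:Z) y.1.

Definition prefix_prob (Pz Pp : Q -> int -> Q -> R) (w : nat -> Q * nat)
  (i : nat) : R := \prod_(j < i) trans Pz Pp (w j) (w j.+1).

Fixpoint mproc (v : Q -> R) (t : R) (w : nat -> Q * nat) (i : nat) : R :=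
  match i with
  | 0%N => (w 0%N).2%:R + v (w 0%N).1 - 0%:R * t
  | i'.+1 =>
      if [forall j : 'I_i'.+1, (0 < (w j).2)%N]
      then (w i).2%:R + v (w i).1 - i%:R * t
      else mproc v t w i'
  end.

Definition upd (w : nat -> Q * nat) (k : nat) (x : Q * nat) : nat -> Q * nat :=
  fun j => if j == k then x else w j.

End POC.

From HB Require Import structures.
From mathcomp Require Import all_boot all_order all_algebra.
From mathcomp Require Import reals.
From mathcomp Require Import zify ring.
Set Implicit Arguments.
Unset Strict Implicit.
Unset Printing Implicit Defensive.
Import Order.TTheory GRing.Theory Num.Theory.
Local Open Scope ring_scope.

(* While the counter stays positive, one step of M_A changes c + v_p in
   expectation by s_p + (A v)_p - v_p, which is exactly t since v is a potential;
   subtracting (i+1) t therefore keeps the expectation. Once the counter has hit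
   zero the process is frozen. *)

Lemma big_cons3 (R : nmodType) (F : int -> R) :
  \sum_(c <- [:: -1; 0; 1]) F c = F (-1) + F 0 + F 1.
Proof. by rewrite !big_cons big_nil addr0 addrA. Qed.

Lemma sum_counter_window (R : nzSemiRingType) (F : int -> R) (g : nat -> R) k :
  (forall c, F c != 0 -> (c == -1) || (c == 0) || (c == 1)) ->
  \sum_(n < k.+3) F ((n : nat)%:Z - k.+1%:Z) * g n
    = F (-1) * g k + F 0 * g k.+1 + F 1 * g k.+2.
Proof.
move=> suppF; rewrite !big_ord_recr /= big1 ?add0r.
  have -> : k%:Z - k.+1%:Z = -1 by lia.
  have -> : k.+1%:Z - k.+1%:Z = 0 by lia.
  by have -> : k.+2%:Z - k.+1%:Z = 1 by lia.
move=> n _; have -> : F ((n : nat)%:Z - k.+1%:Z) = 0; last by rewrite mul0r.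
apply/eqP; apply: contraT => /suppF.
by have := ltn_ord n; move=> ? /orP[/orP[]|] /eqP; lia.
Qed.

Section OneStep.
Variables (R : realType) (Q : finType) (Pz Pp : Q -> int -> Q -> R).
Hypothesis pOC : is_pOC Pz Pp.

Definition step_mean (x : Q * nat) (f : Q -> nat -> R) : R :=
  \sum_(q : Q) \sum_(n < x.2.+2) trans Pz Pp x (q, (n : nat)) * f q n.

Lemma step_meanD x (f g : Q -> nat -> R) :
  step_mean x (fun q n => f q n + g q n) = step_mean x f + step_mean x g.
Proof.
rewrite /step_mean -big_split; apply: eq_bigr => q _.
by rewrite -big_split; apply: eq_bigr => n _; rewrite mulrDr.
Qed.

Lemma step_mean_zero p (f : Q -> nat -> R) :
  step_mean (p, 0%N) f = \sum_(q : Q) (Pz p 0 q * f q 0%N + Pz p 1 q * f q 1%N).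
Proof.
by apply: eq_bigr => q _; rewrite !big_ord_recr big_ord0 /= add0r.
Qed.

Lemma step_mean_pos p k (f : Q -> nat -> R) :
  step_mean (p, k.+1) f
    = \sum_(q : Q) (Pp p (-1) q * f q k + Pp p 0 q * f q k.+1
                    + Pp p 1 q * f q k.+2).
Proof.
have [_ _ suppPp _ _] := pOC.
apply: eq_bigr => q _; rewrite /trans /=.
exact: sum_counter_window (fun c => suppPp p c q).
Qed.

Lemma Pp_row_sum p : \sum_(q : Q) (Pp p (-1) q + Pp p 0 q + Pp p 1 q) = 1.
Proof.
have [_ _ _ _ sumPp] := pOC.
by rewrite -(sumPp p); apply: eq_bigr => q _; rewrite big_cons3.
Qed.

Lemma step_mean_cst x (a : R) : step_mean x (fun _ _ => a) = a.
Proof.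
have [_ _ _ sumPz _] := pOC.
case: x => p [|k].
  rewrite step_mean_zero -[RHS]mul1r -(sumPz p) mulr_suml.
  by apply: eq_bigr => q _; rewrite !big_cons big_nil addr0 mulrDl.
rewrite step_mean_pos -[RHS]mul1r -(Pp_row_sum p) mulr_suml.
by apply: eq_bigr => q _; rewrite !mulrDl.
Qed.

Lemma step_mean_potential t v p k :
  potential Pp t v ->
  step_mean (p, k.+1) (fun q n => n%:R + v q) = k.+1%:R + v p + t.
Proof.
move=> /(_ p); rewrite /svec /Amat => potv.
rewrite step_mean_pos.
transitivity (\sum_(q : Q) \sum_(c <- [:: -1; 0; 1]) Pp p c q * c%:~R
  + \sum_(q : Q) (\sum_(c <- [:: -1; 0; 1]) Pp p c q) * v q
  + \sum_(q : Q) (Pp p (-1) q + Pp p 0 q + Pp p 1 q) * k.+1%:R).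
  rewrite -!big_split; apply: eq_bigr => q _ /=.
  by rewrite !big_cons3 !mulrS; ring.
by rewrite potv -mulr_suml Pp_row_sum mul1r; ring.
Qed.

End OneStep.

Section FrozenProcess.
Variables (R : realType) (Q : finType) (v : Q -> R) (t : R).

Definition counter_pos (w : nat -> Q * nat) (i : nat) : bool :=
  [forall j : 'I_i.+1, (0 < (w j).2)%N].

Lemma counter_posW w i : counter_pos w i.+1 -> counter_pos w i.
Proof. by move=> /forallP posw; apply/forallP => j; exact: posw (widen_ord _ j). Qed.

Lemma mproc_ext (w w' : nat -> Q * nat) i :
  (forall j, (j <= i)%N -> w j = w' j) -> mproc v t w i = mproc v t w' i.
Proof.
elim: i => [|i IH] eqw /=; first by rewrite eqw.
rewrite -!/(counter_pos _ i) eqw // IH => [|j lej]; last exact/eqw/leqW.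
suff -> : counter_pos w i = counter_pos w' i by [].
by apply: eq_forallb => j; rewrite eqw // ltnW.
Qed.

Lemma counter_pos_upd w i x : counter_pos (upd w i.+1 x) i = counter_pos w i.
Proof. by apply: eq_forallb => j; rewrite /upd (ltn_eqF (ltn_ord j)). Qed.

Lemma mproc_pos w i :
  counter_pos w i -> mproc v t w i = (w i).2%:R + v (w i).1 - i%:R * t.
Proof.
by case: i => [//|i] posw /=; rewrite -/(counter_pos w i) (counter_posW posw).
Qed.

Lemma mproc_upd_pos w i x :
  counter_pos w i -> mproc v t (upd w i.+1 x) i.+1 = x.2%:R + v x.1 - i.+1%:R * t.
Proof.
move=> posw /=; rewrite -/(counter_pos (upd w i.+1 x) i) counter_pos_upd posw.
by rewrite /upd eqxx.
Qed.

Lemma mproc_upd_stopped w i x :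
  ~~ counter_pos w i -> mproc v t (upd w i.+1 x) i.+1 = mproc v t w i.
Proof.
move=> /negbTE stopped /=.
rewrite -/(counter_pos (upd w i.+1 x) i) counter_pos_upd stopped.
by apply: mproc_ext => j lej; rewrite /upd ltn_eqF // ltnS.
Qed.

End FrozenProcess.

Theorem mainTheorem10 (R : realType) (Q : finType)
  (Pz Pp : Q -> int -> Q -> R) (alpha v : Q -> R) (r : Q) (c0 : nat) :
  is_pOC Pz Pp ->
  strongly_connected Pp ->
  invariant_dist Pp alpha ->
  potential Pp (trend Pp alpha) v ->
  forall (i : nat) (w : nat -> Q * nat),
    w 0%N = (r, c0) ->
    0 < prefix_prob Pz Pp w i ->
    \sum_(q : Q) \sum_(n < (w i).2.+2)
        trans Pz Pp (w i) (q, (n : nat)) *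
        mproc v (trend Pp alpha) (upd w i.+1 (q, (n : nat))) i.+1
      = mproc v (trend Pp alpha) w i.
Proof.
move=> pOC _ _ potv i w _ _.
have [posw | stopped] := boolP (counter_pos w i); last first.
  rewrite -[RHS](step_mean_cst pOC (w i)).
  by apply: eq_bigr => q _; apply: eq_bigr => n _; rewrite mproc_upd_stopped.
transitivity (step_mean Pz Pp (w i) (fun q n => n%:R + v q - i.+1%:R * trend Pp alpha)).
  by apply: eq_bigr => q _; apply: eq_bigr => n _; rewrite mproc_upd_pos.
rewrite step_meanD step_mean_cst // (mproc_pos v _ posw).
have := forallP posw ord_max; case: (w i) => p [|k] //= _.
by rewrite (step_mean_potential pOC _ _ potv) -[i.+1%:R]natr1; ring.
Qed.
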